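(* Let the functions satisfy the $M=2$ system and the boundary conditions (B) (see context). Then for all $s>0$: (i) $\eta_0x_0y_0+\eta_1x_0y_1+(-\xi_0+\eta_2+s)x_0y_2+x_1y_0+x_2y_1-\xi_1x_1y_2-\xi_2x_2y_2+\eta_0=0$; (ii) $\xi_2=\eta_0-e_1$; (iii) $sx_0y_2=\eta_0\xi_2+\eta_1-\xi_1+e_2-\eta_0$; (iv) $x_0y_0+x_1y_1+x_2y_2=0$; (v) $-3e_3+e_2(e_1+\eta_0-1)-\eta_0(e_1-\eta_0+1)(e_1+\eta_0-2)+(2e_1-1)\eta_1+(1-e_1)\xi_1-sx_0y_1+sx_0y_2(-2\eta_0+\xi_2+2)+sx_1y_2-3(\eta_2+\xi_0)=0$; (vi) $3e_3+e_2(-2e_1+\eta_0-4)+\eta_0(e_1-\eta_0+1)(2e_1-\eta_0+2)-(e_1+1)\eta_1+(2e_1-3\eta_0+4)\xi_1+2sx_0y_1+sx_0y_2(2e_1-\eta_0+2)+sx_1y_2+3\xi_0=0$; (vii) $e_2(e_1+\eta_0-1)-\eta_0(e_1-\eta_0+1)(e_1+\eta_0-2)+(-e_1+3\eta_0-4)\eta_1+(1-e_1)\xi_1-sx_0y_1-sx_0y_2(e_1+\eta_0-2)-2sx_1y_2+3\eta_2=0$; (viii) $e_3+\xi_0-\eta_2-\eta_0\xi_1-\xi_2\eta_1-x_2y_0+\eta_0x_2y_1-\xi_2x_1y_0+\eta_0\xi_2x_1y_1-\xi_1x_0y_0+(\xi_0-\eta_2-\xi_2\eta_1)x_0y_1+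\xi_1\eta_1x_0y_2+(\xi_0-\eta_2-\eta_0\xi_1)x_1y_2+\eta_1x_2y_2=0$.
   Context: Fix complex parameters $\nu_0,\nu_1,\nu_2$ with $\nu_2-\nu_1\notin\mathbb Z$ (generic conditions), and let $e_1=\nu_0+\nu_1+\nu_2$, $e_2=\nu_0\nu_1+\nu_0\nu_2+\nu_1\nu_2$, $e_3=\nu_0\nu_1\nu_2$. The $M=2$ system is the following system for smooth complex-valued functions $x_0,x_1,x_2,y_0,y_1,y_2,\xi_0,\xi_1,\xi_2,\eta_0,\eta_1,\eta_2$ of $s\in(0,\infty)$, with $'=d/ds$: $sx_0'=-\eta_0x_0-x_1$, $sx_1'=-\eta_1x_0-x_2$, $sx_2'=-\eta_2x_0-sx_0+\xi_0x_0+\xi_1x_1+\xi_2x_2$, $sy_2'=-\xi_2y_2+y_1$, $sy_1'=-\xi_1y_2+y_0$, $sy_0'=-\xi_0y_2+sy_2+\eta_0y_0+\eta_1y_1+\eta_2y_2$, $\xi_0'=-x_0y_0$, $\xi_1'=-x_0y_1$, $\xi_2'=-x_0y_2$, $\eta_0'=-x_0y_2$, $\eta_1'=-x_1y_2$, $\eta_2'=-x_2y_2$. Boundary conditions (B): as $s\to0^+$, $\eta_0,\eta_1,\eta_2\to0$, $\xi_0\to-e_3$, $\xi_1\to e_2$, $\xi_2\to-e_1$, and $x_j(s)y_k(s)\to0$, $s\,x_j(s)y_k(s)\to0$ for all $j,k\in\{0,1,2\}$. (These encode the small-$s$ behaviour of the variables arising from Strahov's Hamiltonian formulation of the $M=2$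 hard-edge gap probability on $(0,s)$.) *)

From Stdlib Require Import Reals ZArith List.
Import ListNotations.
Open Scope R_scope.

Definition Cpx : Type := (R * R)%type.
Definition RtoC (r : R) : Cpx := (r, 0).
Definition Cadd (z w : Cpx) : Cpx := (fst z + fst w, snd z + snd w).
Definition Cmul (z w : Cpx) : Cpx :=
  (fst z * fst w - snd z * snd w, fst z * snd w + snd z * fst w).
Definition Copp (z : Cpx) : Cpx := (- fst z, - snd z).
Definition Csub (z w : Cpx) : Cpx := Cadd z (Copp w).

Declare Scope C_scope.
Delimit Scope C_scope with C.
Notation "x + y" := (Cadd x y) : C_scope.
Notation "x - y" := (Csub x y) : C_scope.
Notation "x * y" := (Cmul x y) : C_scope.
Notation "- x" := (Copp x) : C_scope.

Definition has_cderiv (f : R -> Cpx) (s : R) (l : Cpx) : Prop :=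
  derivable_pt_lim (fun t => fst (f t)) s (fst l) /\
  derivable_pt_lim (fun t => snd (f t)) s (snd l).

Definition clim0p (f : R -> Cpx) (l : Cpx) : Prop :=
  limit1_in (fun t => fst (f t)) (fun t => 0 < t) (fst l) 0 /\
  limit1_in (fun t => snd (f t)) (fun t => 0 < t) (snd l) 0.

Open Scope C_scope.

Definition e1 (nu0 nu1 nu2 : Cpx) : Cpx := nu0 + nu1 + nu2.
Definition e2 (nu0 nu1 nu2 : Cpx) : Cpx := nu0 * nu1 + nu0 * nu2 + nu1 * nu2.
Definition e3 (nu0 nu1 nu2 : Cpx) : Cpx := nu0 * nu1 * nu2.

Definition s_deriv_eq (f : R -> Cpx) (s : R) (rhs : Cpx) : Prop :=
  exists d : Cpx, has_cderiv f s d /\ RtoC s * d = rhs.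

Definition M2_system (x0 x1 x2 y0 y1 y2 xi0 xi1 xi2 eta0 eta1 eta2 : R -> Cpx)
  : Prop :=
  forall s : R, 0 < s ->
  let S := RtoC s in
  s_deriv_eq x0 s ( - eta0 s * x0 s - x1 s) /\
  s_deriv_eq x1 s ( - eta1 s * x0 s - x2 s) /\
  s_deriv_eq x2 s ( - eta2 s * x0 s - S * x0 s + xi0 s * x0 s
                    + xi1 s * x1 s + xi2 s * x2 s) /\
  s_deriv_eq y2 s ( - xi2 s * y2 s + y1 s) /\
  s_deriv_eq y1 s ( - xi1 s * y2 s + y0 s) /\
  s_deriv_eq y0 s ( - xi0 s * y2 s + S * y2 s + eta0 s * y0 s
                    + eta1 s * y1 s + eta2 s * y2 s) /\
  has_cderiv xi0 s ( - (x0 s * y0 s)) /\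
  has_cderiv xi1 s ( - (x0 s * y1 s)) /\
  has_cderiv xi2 s ( - (x0 s * y2 s)) /\
  has_cderiv eta0 s ( - (x0 s * y2 s)) /\
  has_cderiv eta1 s ( - (x1 s * y2 s)) /\
  has_cderiv eta2 s ( - (x2 s * y2 s)).

Definition bc_B (nu0 nu1 nu2 : Cpx)
  (x0 x1 x2 y0 y1 y2 xi0 xi1 xi2 eta0 eta1 eta2 : R -> Cpx) : Prop :=
  clim0p eta0 (RtoC 0) /\ clim0p eta1 (RtoC 0) /\ clim0p eta2 (RtoC 0) /\
  clim0p xi0 ( - e3 nu0 nu1 nu2) /\
  clim0p xi1 (e2 nu0 nu1 nu2) /\
  clim0p xi2 ( - e1 nu0 nu1 nu2) /\
  (forall (x y : R -> Cpx),
     In x (x0 :: x1 :: x2 :: nil) -> In y (y0 :: y1 :: y2 :: nil) ->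
     clim0p (fun s => x s * y s) (RtoC 0) /\
     clim0p (fun s => RtoC s * (x s * y s)) (RtoC 0)).

(* Each identity states that a polynomial F(s) in s, the unknowns and the e_k
   vanishes on (0, oo).  For (i)-(iv) and (viii), s F'(s) is identically zero
   by the system; for (v)-(vii) it is zero modulo (ii)-(iv).  So F is constant
   on (0, oo), and (B) makes its limit at 0+ equal to 0. *)

From Stdlib Require Import Reals ZArith List Lra.
Open Scope R_scope.

Lemma deriv0_const_pos (f : R -> R) :
  (forall x, 0 < x -> derivable_pt_lim f x 0) ->
  forall a b, 0 < a -> 0 < b -> f a = f b.
Proof.
  intros Hd.
  assert (Hlt : forall a b, 0 < a -> a < b -> f a = f b).
  { intros a b Ha Hab.
    destruct (MVT_cor2 f (fun _ => 0) a b Hab) as [c [Hc _]];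
      [intros c Hc; apply Hd; lra | lra]. }
  intros a b Ha Hb.
  destruct (Rtotal_order a b) as [Hab | [-> | Hba]]; auto.
  symmetry; auto.
Qed.

Lemma adhDa_pos0 : adhDa (fun t => 0 < t) 0.
Proof.
  intros alp Halp; exists (alp / 2); split; [lra|].
  unfold Rdist; rewrite Rminus_0_r, Rabs_right; lra.
Qed.

Lemma deriv0_limit_const (f : R -> R) (l : R) :
  (forall x, 0 < x -> derivable_pt_lim f x 0) ->
  limit1_in f (fun t => 0 < t) l 0 -> forall s, 0 < s -> f s = l.
Proof.
  intros Hd Hl s Hs.
  apply (single_limit f (fun t => 0 < t) (f s) l 0 adhDa_pos0); [|exact Hl].
  intros eps Heps; exists 1; split; [lra|].
  intros x [Hx _]; simpl; unfold Rdist.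
  rewrite (deriv0_const_pos f Hd x s Hx Hs), Rminus_diag, Rabs_R0; lra.
Qed.

Lemma Cpx_ring : ring_theory (RtoC 0) (RtoC 1) Cadd Cmul Csub Copp (@eq Cpx).
Proof.
  constructor; intros;
    repeat match goal with z : Cpx |- _ => destruct z end;
    cbv [RtoC Cadd Cmul Csub Copp fst snd]; f_equal; ring.
Qed.
Add Ring CpxRing : Cpx_ring.

Lemma RtoC_2 : RtoC 2 = Cadd (RtoC 1) (RtoC 1).
Proof. unfold RtoC, Cadd; simpl; f_equal; ring. Qed.
Lemma RtoC_3 : RtoC 3 = Cadd (RtoC 2) (RtoC 1).
Proof. unfold RtoC, Cadd; simpl; f_equal; ring. Qed.
Lemma RtoC_4 : RtoC 4 = Cadd (RtoC 3) (RtoC 1).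
Proof. unfold RtoC, Cadd; simpl; f_equal; ring. Qed.

(* [ring] treats [RtoC 2], [RtoC 3], [RtoC 4] as atoms. *)
Ltac cring := cbv beta; rewrite ?RtoC_4, ?RtoC_3, ?RtoC_2; ring.

Open Scope C_scope.

Lemma RtoC_mul_eq0 s z : 0 < s -> RtoC s * z = RtoC 0 -> z = RtoC 0.
Proof.
  intros Hs E; destruct z as [a b]; unfold RtoC, Cmul in *; simpl in E.
  injection E; intros E2 E1.
  f_equal; apply (Rmult_eq_reg_l s); nra.
Qed.

Lemma sub_eq0 (a b : Cpx) : a - b = RtoC 0 -> a = b.
Proof. intros H; transitivity ((a - b) + b); [ring | rewrite H; ring]. Qed.

Lemma eq0_of_eq (a b : Cpx) : b = RtoC 0 -> a = b -> a = RtoC 0.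
Proof. congruence. Qed.

Lemma eq0_of_combination (a b c d e : Cpx) :
  c = RtoC 0 -> e = RtoC 0 -> a = b * c + d * e -> a = RtoC 0.
Proof. intros -> -> ->; ring. Qed.

Lemma derivable_pt_lim_eq f x l l' :
  derivable_pt_lim f x l -> l = l' -> derivable_pt_lim f x l'.
Proof. intros H <-; exact H. Qed.

Lemma has_cderiv_add f g s df dg : has_cderiv f s df -> has_cderiv g s dg ->
  has_cderiv (fun t => f t + g t) s (df + dg).
Proof. intros [A B] [C D]; split; simpl; apply derivable_pt_lim_plus; auto. Qed.

Lemma has_cderiv_opp f s df : has_cderiv f s df -> has_cderiv (fun t => - f t) s (- df).
Proof. intros [A B]; split; simpl; apply derivable_pt_lim_opp; auto. Qed.

Lemma has_cderiv_mul f g s df dg : has_cderiv f s df -> has_cderiv g s dg ->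
  has_cderiv (fun t => f t * g t) s (df * g s + f s * dg).
Proof.
  intros [A B] [C D]; split; eapply derivable_pt_lim_eq.
  - apply derivable_pt_lim_minus; apply derivable_pt_lim_mult; eassumption.
  - simpl; ring.
  - apply derivable_pt_lim_plus; apply derivable_pt_lim_mult; eassumption.
  - simpl; ring.
Qed.

Lemma has_cderiv_const (c : Cpx) s : has_cderiv (fun _ => c) s (RtoC 0).
Proof. split; apply derivable_pt_lim_const. Qed.

Lemma has_cderiv_RtoC s : has_cderiv RtoC s (RtoC 1).
Proof. split; [apply derivable_pt_lim_id | apply derivable_pt_lim_const]. Qed.

Lemma s_deriv_eq_of f s d : has_cderiv f s d -> s_deriv_eq f s (RtoC s * d).
Proof. exists d; auto. Qed.

Lemma s_deriv_eq_eq f s L L' : s_deriv_eq f s L -> L = L' -> s_deriv_eq f s L'.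
Proof. intros H <-; exact H. Qed.

Lemma s_deriv_eq_add f g s Lf Lg : s_deriv_eq f s Lf -> s_deriv_eq g s Lg ->
  s_deriv_eq (fun t => f t + g t) s (Lf + Lg).
Proof.
  intros [df [A <-]] [dg [B <-]]; exists (df + dg).
  split; [apply has_cderiv_add; auto | ring].
Qed.

Lemma s_deriv_eq_opp f s Lf : s_deriv_eq f s Lf -> s_deriv_eq (fun t => - f t) s (- Lf).
Proof.
  intros [df [A <-]]; exists (- df).
  split; [apply has_cderiv_opp; auto | ring].
Qed.

Lemma s_deriv_eq_sub f g s Lf Lg : s_deriv_eq f s Lf -> s_deriv_eq g s Lg ->
  s_deriv_eq (fun t => f t - g t) s (Lf - Lg).
Proof. intros A B; exact (s_deriv_eq_add _ _ _ _ _ A (s_deriv_eq_opp _ _ _ B)). Qed.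

Lemma s_deriv_eq_mul f g s Lf Lg : s_deriv_eq f s Lf -> s_deriv_eq g s Lg ->
  s_deriv_eq (fun t => f t * g t) s (Lf * g s + f s * Lg).
Proof.
  intros [df [A <-]] [dg [B <-]]; exists (df * g s + f s * dg).
  split; [apply has_cderiv_mul; auto | ring].
Qed.

Lemma s_deriv_eq_const (c : Cpx) s : s_deriv_eq (fun _ => c) s (RtoC 0).
Proof. exists (RtoC 0); split; [apply has_cderiv_const | ring]. Qed.

Lemma s_deriv_eq_RtoC s : s_deriv_eq RtoC s (RtoC s).
Proof. exists (RtoC 1); split; [apply has_cderiv_RtoC | ring]. Qed.

Lemma clim0p_add f g lf lg : clim0p f lf -> clim0p g lg ->
  clim0p (fun t => f t + g t) (lf + lg).
Proof. intros [A B] [C D]; split; simpl; apply limit_plus; auto. Qed.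

Lemma clim0p_opp f lf : clim0p f lf -> clim0p (fun t => - f t) (- lf).
Proof. intros [A B]; split; simpl; apply limit_Ropp; auto. Qed.

Lemma clim0p_sub f g lf lg : clim0p f lf -> clim0p g lg ->
  clim0p (fun t => f t - g t) (lf - lg).
Proof. intros A B; exact (clim0p_add _ _ _ _ A (clim0p_opp _ _ B)). Qed.

Lemma clim0p_mul f g lf lg : clim0p f lf -> clim0p g lg ->
  clim0p (fun t => f t * g t) (lf * lg).
Proof.
  intros [A B] [C D]; split; simpl.
  - apply limit_minus; apply limit_mul; auto.
  - apply limit_plus; apply limit_mul; auto.
Qed.

Lemma clim0p_const (c : Cpx) : clim0p (fun _ => c) c.
Proof. split; [exact (limit_free (fun _ => fst c) _ 0 0) | exact (limit_free (fun _ => snd c) _ 0 0)]. Qed.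

Lemma clim0p_eq f l l' : clim0p f l -> l = l' -> clim0p f l'.
Proof. intros H <-; exact H. Qed.

Lemma vanishes_of_s_deriv0 (F : R -> Cpx) :
  (forall t, 0 < t -> s_deriv_eq F t (RtoC 0)) -> clim0p F (RtoC 0) ->
  forall t, 0 < t -> F t = RtoC 0.
Proof.
  intros HF [Hre Him] t Ht.
  assert (Hd : forall x, 0 < x -> has_cderiv F x (RtoC 0)).
  { intros x Hx; destruct (HF x Hx) as [d [Hd Ed]].
    rewrite <- (RtoC_mul_eq0 x d Hx Ed); exact Hd. }
  rewrite (surjective_pairing (F t)); unfold RtoC; f_equal;
    [apply (deriv0_limit_const (fun t => fst (F t)))
    | apply (deriv0_limit_const (fun t => snd (F t)))]; auto;
    intros x Hx; apply Hd, Hx.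
Qed.

Ltac s_deriv_step :=
  first [ eassumption | eapply s_deriv_eq_of; eassumption
        | apply s_deriv_eq_RtoC | apply s_deriv_eq_const
        | eapply s_deriv_eq_add | eapply s_deriv_eq_sub
        | eapply s_deriv_eq_mul | eapply s_deriv_eq_opp ].

Section M2FirstIntegrals.

Context {nu0 nu1 nu2 : Cpx}.
Context {x0 x1 x2 y0 y1 y2 xi0 xi1 xi2 eta0 eta1 eta2 : R -> Cpx}.
Hypothesis Hsys : M2_system x0 x1 x2 y0 y1 y2 xi0 xi1 xi2 eta0 eta1 eta2.
Hypothesis HB : bc_B nu0 nu1 nu2 x0 x1 x2 y0 y1 y2 xi0 xi1 xi2 eta0 eta1 eta2.

Local Notation E1 := (e1 nu0 nu1 nu2).
Local Notation E2 := (e2 nu0 nu1 nu2).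
Local Notation E3 := (e3 nu0 nu1 nu2).

Lemma clim0p_xy x y : In x (x0 :: x1 :: x2 :: nil) -> In y (y0 :: y1 :: y2 :: nil) ->
  clim0p (fun t => x t * y t) (RtoC 0).
Proof. intros Hx Hy; apply HB; assumption. Qed.

Lemma clim0p_sxy x y : In x (x0 :: x1 :: x2 :: nil) -> In y (y0 :: y1 :: y2 :: nil) ->
  clim0p (fun t => RtoC t * (x t * y t)) (RtoC 0).
Proof. intros Hx Hy; apply HB; assumption. Qed.

Ltac clim0p_step :=
  first [ apply clim0p_sxy; simpl; tauto | apply clim0p_xy; simpl; tauto
        | eassumption | apply clim0p_const
        | eapply clim0p_add | eapply clim0p_sub
        | eapply clim0p_mul | eapply clim0p_opp ].

(* Leaves the goal [s F'(s) = 0], with [s F'(s)] expanded through the system.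
   The limit [F(0+) = 0] is discharged provided [F] is written as a polynomial
   in the [eta_j], [xi_j], [x_j y_k] and [s x_j y_k]. *)
Ltac first_integral :=
  apply vanishes_of_s_deriv0;
  [ intros t Ht;
    destruct (Hsys t Ht) as (? & ? & ? & ? & ? & ? & ? & ? & ? & ? & ? & ?);
    eapply s_deriv_eq_eq; [repeat s_deriv_step |]
  | destruct HB as (? & ? & ? & ? & ? & ? & _);
    eapply clim0p_eq; [repeat clim0p_step | cring] ].

Definition invariant1 t := eta0 t * (x0 t * y0 t) + eta1 t * (x0 t * y1 t)
  + (eta2 t - xi0 t) * (x0 t * y2 t) + RtoC t * (x0 t * y2 t) + x1 t * y0 t
  + x2 t * y1 t - xi1 t * (x1 t * y2 t) - xi2 t * (x2 t * y2 t) + eta0 t.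

Definition invariant2 t := xi2 t - (eta0 t - E1).

Definition invariant3 t :=
  RtoC t * (x0 t * y2 t) - (eta0 t * xi2 t + eta1 t - xi1 t + E2 - eta0 t).

Definition invariant4 t := x0 t * y0 t + x1 t * y1 t + x2 t * y2 t.

Definition invariant5 t :=
  - (RtoC 3 * E3) + E2 * (E1 + eta0 t - RtoC 1)
  - eta0 t * (E1 - eta0 t + RtoC 1) * (E1 + eta0 t - RtoC 2)
  + (RtoC 2 * E1 - RtoC 1) * eta1 t + (RtoC 1 - E1) * xi1 t
  - RtoC t * (x0 t * y1 t)
  + RtoC t * (x0 t * y2 t) * (- (RtoC 2 * eta0 t) + xi2 t + RtoC 2)
  + RtoC t * (x1 t * y2 t) - RtoC 3 * (eta2 t + xi0 t).

Definition invariant6 t :=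
  RtoC 3 * E3 + E2 * (- (RtoC 2 * E1) + eta0 t - RtoC 4)
  + eta0 t * (E1 - eta0 t + RtoC 1) * (RtoC 2 * E1 - eta0 t + RtoC 2)
  - (E1 + RtoC 1) * eta1 t + (RtoC 2 * E1 - RtoC 3 * eta0 t + RtoC 4) * xi1 t
  + RtoC 2 * (RtoC t * (x0 t * y1 t))
  + RtoC t * (x0 t * y2 t) * (RtoC 2 * E1 - eta0 t + RtoC 2)
  + RtoC t * (x1 t * y2 t) + RtoC 3 * xi0 t.

Definition invariant7 t :=
  E2 * (E1 + eta0 t - RtoC 1)
  - eta0 t * (E1 - eta0 t + RtoC 1) * (E1 + eta0 t - RtoC 2)
  + (- E1 + RtoC 3 * eta0 t - RtoC 4) * eta1 t + (RtoC 1 - E1) * xi1 t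
  - RtoC t * (x0 t * y1 t)
  - RtoC t * (x0 t * y2 t) * (E1 + eta0 t - RtoC 2)
  - RtoC 2 * (RtoC t * (x1 t * y2 t)) + RtoC 3 * eta2 t.

Definition invariant8 t :=
  E3 + xi0 t - eta2 t - eta0 t * xi1 t - xi2 t * eta1 t - x2 t * y0 t
  + eta0 t * (x2 t * y1 t) - xi2 t * (x1 t * y0 t)
  + eta0 t * xi2 t * (x1 t * y1 t) - xi1 t * (x0 t * y0 t)
  + (xi0 t - eta2 t - xi2 t * eta1 t) * (x0 t * y1 t)
  + xi1 t * eta1 t * (x0 t * y2 t)
  + (xi0 t - eta2 t - eta0 t * xi1 t) * (x1 t * y2 t)
  + eta1 t * (x2 t * y2 t).

Lemma invariant1_vanishes : forall t, 0 < t -> invariant1 t = RtoC 0.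
Proof. unfold invariant1; first_integral; cring. Qed.

Lemma invariant2_vanishes : forall t, 0 < t -> invariant2 t = RtoC 0.
Proof. unfold invariant2; first_integral; cring. Qed.

Lemma invariant3_vanishes : forall t, 0 < t -> invariant3 t = RtoC 0.
Proof. unfold invariant3; first_integral; cring. Qed.

Lemma invariant4_vanishes : forall t, 0 < t -> invariant4 t = RtoC 0.
Proof. unfold invariant4; first_integral; cring. Qed.

Lemma invariant8_vanishes : forall t, 0 < t -> invariant8 t = RtoC 0.
Proof. unfold invariant8; first_integral; cring. Qed.

Lemma xi2_eq t : 0 < t -> xi2 t = eta0 t - E1.
Proof. intros Ht; apply sub_eq0, invariant2_vanishes, Ht. Qed.

(* The last three are first integrals only on the locus of the first four:
   [s F'] is [c s (iv) + s x0 y2 (iii)] once [xi2] is eliminated by (ii). *)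
Lemma invariant5_vanishes : forall t, 0 < t -> invariant5 t = RtoC 0.
Proof.
  unfold invariant5; first_integral.
  apply (eq0_of_combination _ (RtoC 2 * RtoC t) (invariant4 t)
           (RtoC t * (x0 t * y2 t)) (invariant3 t));
    [apply invariant4_vanishes, Ht | apply invariant3_vanishes, Ht |].
  unfold invariant3, invariant4; rewrite (xi2_eq t Ht); cring.
Qed.

Lemma invariant6_vanishes : forall t, 0 < t -> invariant6 t = RtoC 0.
Proof.
  unfold invariant6; first_integral.
  apply (eq0_of_combination _ (- RtoC t) (invariant4 t)
           (RtoC t * (x0 t * y2 t)) (invariant3 t));
    [apply invariant4_vanishes, Ht | apply invariant3_vanishes, Ht |].
  unfold invariant3, invariant4; rewrite (xi2_eq t Ht); cring.
Qed.

Lemma invariant7_vanishes : forall t, 0 < t -> invariant7 t = RtoC 0.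
Proof.
  unfold invariant7; first_integral.
  apply (eq0_of_combination _ (- RtoC t) (invariant4 t)
           (RtoC t * (x0 t * y2 t)) (invariant3 t));
    [apply invariant4_vanishes, Ht | apply invariant3_vanishes, Ht |].
  unfold invariant3, invariant4; rewrite (xi2_eq t Ht); cring.
Qed.

End M2FirstIntegrals.

Theorem mainTheorem6 (nu0 nu1 nu2 : Cpx)
  (x0 x1 x2 y0 y1 y2 xi0 xi1 xi2 eta0 eta1 eta2 : R -> Cpx)
  (Hgen : forall k : Z, nu2 - nu1 <> RtoC (IZR k))
  (Hsys : M2_system x0 x1 x2 y0 y1 y2 xi0 xi1 xi2 eta0 eta1 eta2)
  (HB : bc_B nu0 nu1 nu2 x0 x1 x2 y0 y1 y2 xi0 xi1 xi2 eta0 eta1 eta2) :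
  forall s : R, 0 < s ->
  let E1 := e1 nu0 nu1 nu2 in
  let E2 := e2 nu0 nu1 nu2 in
  let E3 := e3 nu0 nu1 nu2 in
  let S := RtoC s in
  let X0 := x0 s in let X1 := x1 s in let X2 := x2 s in
  let Y0 := y0 s in let Y1 := y1 s in let Y2 := y2 s in
  let A0 := xi0 s in let A1 := xi1 s in let A2 := xi2 s in
  let H0 := eta0 s in let H1 := eta1 s in let H2 := eta2 s in
  let one := RtoC 1 in let two := RtoC 2 in let three := RtoC 3 in
  let four := RtoC 4 in let zero := RtoC 0 in
  (* (i) *)
  H0 * X0 * Y0 + H1 * X0 * Y1 + (- A0 + H2 + S) * X0 * Y2 + X1 * Y0
    + X2 * Y1 - A1 * X1 * Y2 - A2 * X2 * Y2 + H0 = zero /\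
  (* (ii) *)
  A2 = H0 - E1 /\
  (* (iii) *)
  S * X0 * Y2 = H0 * A2 + H1 - A1 + E2 - H0 /\
  (* (iv) *)
  X0 * Y0 + X1 * Y1 + X2 * Y2 = zero /\
  (* (v) *)
  - (three * E3) + E2 * (E1 + H0 - one)
    - H0 * (E1 - H0 + one) * (E1 + H0 - two)
    + (two * E1 - one) * H1 + (one - E1) * A1 - S * X0 * Y1
    + S * X0 * Y2 * (- (two * H0) + A2 + two) + S * X1 * Y2
    - three * (H2 + A0) = zero /\
  (* (vi) *)
  three * E3 + E2 * (- (two * E1) + H0 - four)
    + H0 * (E1 - H0 + one) * (two * E1 - H0 + two)
    - (E1 + one) * H1 + (two * E1 - three * H0 + four) * A1
    + two * S * X0 * Y1 + S * X0 * Y2 * (two * E1 - H0 + two)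
    + S * X1 * Y2 + three * A0 = zero /\
  (* (vii) *)
  E2 * (E1 + H0 - one) - H0 * (E1 - H0 + one) * (E1 + H0 - two)
    + (- E1 + three * H0 - four) * H1 + (one - E1) * A1 - S * X0 * Y1
    - S * X0 * Y2 * (E1 + H0 - two) - two * S * X1 * Y2 + three * H2 = zero /\
  (* (viii) *)
  E3 + A0 - H2 - H0 * A1 - A2 * H1 - X2 * Y0 + H0 * X2 * Y1
    - A2 * X1 * Y0 + H0 * A2 * X1 * Y1 - A1 * X0 * Y0
    + (A0 - H2 - A2 * H1) * X0 * Y1 + A1 * H1 * X0 * Y2
    + (A0 - H2 - H0 * A1) * X1 * Y2 + H1 * X2 * Y2 = zero.
Proof.
  intros s Hs; cbv zeta.
  repeat split; try apply sub_eq0;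
    [ apply (eq0_of_eq _ _ (invariant1_vanishes Hsys HB s Hs))
    | apply (eq0_of_eq _ _ (invariant2_vanishes Hsys HB s Hs))
    | apply (eq0_of_eq _ _ (invariant3_vanishes Hsys HB s Hs))
    | apply (eq0_of_eq _ _ (invariant4_vanishes Hsys HB s Hs))
    | apply (eq0_of_eq _ _ (invariant5_vanishes Hsys HB s Hs))
    | apply (eq0_of_eq _ _ (invariant6_vanishes Hsys HB s Hs))
    | apply (eq0_of_eq _ _ (invariant7_vanishes Hsys HB s Hs))
    | apply (eq0_of_eq _ _ (invariant8_vanishes Hsys HB s Hs)) ];
    unfold invariant1, invariant2, invariant3, invariant4,
      invariant5, invariant6, invariant7, invariant8; cring.
Qed.
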